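(* Let $X$ be a supertropical semiring. (1) With its intrinsic order, $X$ is a bounded join-semilattice, with $\sup\emptyset=0$ and, for $x,y\in X$, $\sup\{x,y\}=x+y$ if $x\ne y$ and $\sup\{x,y\}=x$ if $x=y$. (2) Let $n\in\mathbb{N}$, $a_1,\dots,a_n\in X$, $s=a_1+\dots+a_n$ and $M=\sup\{a_1,\dots,a_n\}$. Then $s\notin\nu X$ if and only if $M\notin\nu X$ and there is exactly one $i\in\{1,\dots,n\}$ with $a_i=M$, if and only if $M\notin\nu X$ and there is exactly one $i\in\{1,\dots,n\}$ with $a_i=M=s$.
   Context: A semiring $(X,+,0,\cdot)$: $(X,+,0)$ commutative monoid, $(X,\cdot)$ semigroup, distributivity, $0$ absorbing. Intrinsic order: $a\le b$ iff $a+x=b$ for some $x$. $\nu(x)=x+x$; $\nu X=\{a: a=a+a\}$. A supertropical semiring is a unital commutative semiring with $2=4$ (where $n=1+\dots+1$), such that $a+b\in\{a,b\}$ whenever $\nu(a)\ne\nu(b)$, and $a+b=\nu(a)$ whenever $\nu(a)=\nu(b)$. A bounded join-semilattice is a partial order in which every finite subset has a least upper bound. *)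

From mathcomp Require Import all_boot all_algebra.
Set Implicit Arguments. Unset Strict Implicit. Unset Printing Implicit Defensive.
Import GRing.Theory.
Local Open Scope ring_scope.

(* Unital commutative semirings (trivial semiring 1 = 0 allowed) are
   MathComp's comPzSemiRingType. *)

Definition nu {X : comPzSemiRingType} (x : X) : X := x + x.

Definition in_nuX {X : comPzSemiRingType} (a : X) : Prop := a = a + a.

Definition supertropical (X : comPzSemiRingType) : Prop :=
  [/\ (2%:R : X) = 4%:R,
      (forall a b : X, nu a <> nu b -> a + b = a \/ a + b = b) &
      (forall a b : X, nu a = nu b -> a + b = nu a)].

Definition ile {X : comPzSemiRingType} (a b : X) : Prop := exists x, a + x = b.

Definition is_lub {X : comPzSemiRingType} (S : X -> Prop) (m : X) : Prop :=
  (forall s, S s -> ile s m) /\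
  (forall u, (forall s, S s -> ile s u) -> ile m u).

Definition ile_partial_order (X : comPzSemiRingType) : Prop :=
  [/\ (forall a : X, ile a a),
      (forall a b : X, ile a b -> ile b a -> a = b) &
      (forall a b c : X, ile a b -> ile b c -> ile a c)].

From mathcomp Require Import all_boot all_algebra.
From mathcomp Require Import ring.
Import GRing.Theory.
Set Implicit Arguments. Unset Strict Implicit.
Local Open Scope ring_scope.

(* The identity 2 = 4 makes nu idempotent, and the two supertropical axioms
   then show that an element strictly below y (in the intrinsic order) is
   absorbed by y: x + y = y.  This gives antisymmetry and the explicit binary
   joins.  For a finite family with supremum M, every a_i is absorbed by M
   or equals M, so the sum s is M or nu M.  Hence s lies outside nu X exactly
   when M does and is attained once, since two copies of M add up to nu M. *)

Lemma big_addr_absorb (V : nmodType) (I : Type) (r : seq I) (P : pred I)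
    (F : I -> V) (m : V) :
  (forall i, P i -> F i + m = m) -> \sum_(i <- r | P i) F i + m = m.
Proof.
move=> Fm; apply: (big_ind (fun v => v + m = m)); first by rewrite add0r.
  by move=> v w vm wm; rewrite -addrA wm.
exact: Fm.
Qed.

Section IntrinsicOrder.
Variable X : comPzSemiRingType.

Lemma ile_refl (a : X) : ile a a.
Proof. by exists 0; rewrite addr0. Qed.

Lemma ile_trans (a b c : X) : ile a b -> ile b c -> ile a c.
Proof. by move=> [x <-] [y <-]; exists (x + y); rewrite addrA. Qed.

Lemma ile_addr (a b : X) : ile a (a + b).
Proof. by exists b. Qed.

Lemma ile0x (a : X) : ile 0 a.
Proof. by exists a; rewrite add0r. Qed.

Lemma is_lub_empty : is_lub (fun _ : X => False) 0.
Proof. by split=> // u _; apply: ile0x. Qed.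

Lemma is_lub_dup (x : X) : is_lub (fun z => z = x \/ z = x) x.
Proof.
split; first by move=> s [->|->]; apply: ile_refl.
by move=> u ub; apply: ub; left.
Qed.

Lemma is_lub_cons (x m j : X) (F : seq X) :
  is_lub (fun z => z \in F) m -> is_lub (fun z => z = x \/ z = m) j ->
  is_lub (fun z => z \in x :: F) j.
Proof.
move=> [mub mleast] [jub jleast]; split.
  move=> z; rewrite in_cons => /orP [/eqP ->|zF]; first by apply: jub; left.
  by apply: ile_trans (mub _ zF) (jub _ _); right.
move=> u ub; apply: jleast => z [->|->]; first by apply: ub; rewrite mem_head.
by apply: mleast => w wF; apply: ub; rewrite in_cons wF orbT.
Qed.

End IntrinsicOrder.

Section Supertropical.
Variable X : comPzSemiRingType.
Hypothesis HX : supertropical X.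

Lemma nu_idem (a : X) : nu (nu a) = nu a.
Proof.
case: HX => two_eq_four _ _.
have := congr1 (fun c => c * a) two_eq_four => /=.
rewrite !mulr_natl !mulrS mulr0n !addr0 /nu => E.
by rewrite [RHS]E; ring.
Qed.

Lemma add_nu_neq (a b : X) : nu a <> nu b -> a + b = a \/ a + b = b.
Proof. by case: HX => _ H _; apply: H. Qed.

Lemma add_nu_eq (a b : X) : nu a = nu b -> a + b = nu a.
Proof. by case: HX => _ _ H; apply: H. Qed.

Lemma in_nuX_nu (a : X) : in_nuX (nu a).
Proof. by rewrite /in_nuX -[nu a in LHS]nu_idem. Qed.

Lemma addr_nu (a : X) : a + nu a = nu a.
Proof. by apply: add_nu_eq; rewrite nu_idem. Qed.

Lemma nuD (a b : X) : nu (a + b) = nu a + nu b.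
Proof. by rewrite /nu; ring. Qed.

Lemma nu_absorbed (x p : X) : x + p = p -> nu x + p = p.
Proof. by move=> xp; rewrite /nu -addrA xp xp. Qed.

Lemma add_ile_neq (x y : X) : ile x y -> x <> y -> x + y = y.
Proof.
move=> [p <-] xneq; rewrite addrA -/(nu x).
case: (eqVneq (nu x) (nu p)) => [E|/eqP E].
  by rewrite (add_nu_eq E) add_nu_eq // nu_idem.
case: (add_nu_neq E) => xp; first by rewrite xp in xneq.
by rewrite xp nu_absorbed.
Qed.

Lemma ile_antisym (a b : X) : ile a b -> ile b a -> a = b.
Proof.
move=> [x ax] [y ba].
have axy : a + (x + y) = a by rewrite addrA ax ba.
have anuxy : a + nu (x + y) = a by rewrite /nu addrA axy axy.
have anux : a + nu x = a.
  have nux2 : nu x + nu x = nu x by rewrite -[RHS]nu_idem.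
  rewrite -{1}anuxy nuD.
  have -> : a + (nu x + nu y) + nu x = a + (nu x + nu x) + nu y by ring.
  by rewrite nux2 -addrA -nuD anuxy.
rewrite -ax; case: (eqVneq (nu a) (nu x)) => [E|/eqP E].
  by rewrite (add_nu_eq E) -addr_nu E anux.
case: (add_nu_neq E) => // axx; case: E.
have -> : a = nu x by rewrite -{1}anux /nu addrA axx.
by rewrite nu_idem.
Qed.

Lemma ile_partial_orderP : ile_partial_order X.
Proof. by split; [apply: ile_refl | apply: ile_antisym | apply: ile_trans]. Qed.

Lemma is_lub_pair (x y : X) :
  x <> y -> is_lub (fun z => z = x \/ z = y) (x + y).
Proof.
move=> xy; split.
  by move=> s [->|->]; [apply: ile_addr | rewrite addrC; apply: ile_addr].
move=> u ub; have [xu yu] := (ub x (or_introl erefl), ub y (or_intror erefl)).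
case: (eqVneq x u) => [xu'|/eqP xneq]; subst.
  by rewrite addrC (add_ile_neq yu) ?ile_refl // => /esym.
case: (eqVneq y u) => [yu'|/eqP yneq]; subst; first by rewrite (add_ile_neq xu) ?ile_refl.
by exists u; rewrite -addrA (add_ile_neq yu yneq) (add_ile_neq xu xneq).
Qed.

Lemma exists_is_lub_pair (x y : X) : exists j, is_lub (fun z => z = x \/ z = y) j.
Proof.
case: (eqVneq x y) => [->|/eqP xy]; first by exists y; apply: is_lub_dup.
by exists (x + y); apply: is_lub_pair.
Qed.

Lemma exists_is_lub_seq (F : seq X) : exists m, is_lub (fun z => z \in F) m.
Proof.
elim: F => [|x F [m mlub]]; first by exists 0; split=> // u _; apply: ile0x.
have [j jlub] := exists_is_lub_pair x m.
by exists j; apply: is_lub_cons mlub jlub.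
Qed.

Section FiniteSum.
Variables (n : nat) (a : 'I_n -> X) (M : X).
Hypothesis lubM : is_lub (fun z => exists i : 'I_n, z = a i) M.

Let s := \sum_(i < n) a i.

Lemma ile_family_lub i : ile (a i) M.
Proof. by case: lubM => ub _; apply: ub; exists i. Qed.

Lemma add_lub_neq i : a i <> M -> a i + M = M.
Proof. exact/add_ile_neq/ile_family_lub. Qed.

Lemma ile_lub_sum : ile M s.
Proof.
case: lubM => _; apply=> _ [i ->].
by rewrite /s (bigD1 i) //=; apply: ile_addr.
Qed.

Lemma sum_add_nu_lub : s + nu M = nu M.
Proof.
apply: big_addr_absorb => i _.
case: (eqVneq (a i) M) => [->|/eqP aiM]; first exact: addr_nu.
by rewrite /nu addrA add_lub_neq.
Qed.

Lemma sum_lub_or_nu : s = M \/ s = nu M.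
Proof.
case: (eqVneq s M) => [|/eqP sM]; first by left.
right; rewrite -sum_add_nu_lub addrC nu_absorbed //.
exact: add_ile_neq ile_lub_sum (fun Ms => sM (esym Ms)).
Qed.

Lemma sum_unique_lub : (exists! i, a i = M) -> s = M.
Proof.
move=> [i [aiM iuniq]]; rewrite /s (bigD1 i) //= aiM addrC.
apply: big_addr_absorb => j ji; apply: add_lub_neq => ajM.
by move/eqP: ji; apply; rewrite (iuniq j ajM).
Qed.

Lemma sum_ghost_free_lub : ~ in_nuX s -> s = M.
Proof. by case: sum_lub_or_nu => // -> /(_ (in_nuX_nu M)). Qed.

Lemma sum_ghost_free_unique : ~ in_nuX s -> exists! i, a i = M.
Proof.
move=> sfree; have sM := sum_ghost_free_lub sfree.
have [i aiM] : exists i, a i = M.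
  case: (pickP (fun i => a i == M)) => [i /eqP|noM]; first by exists i.
  have sMM : s + M = M.
    apply: big_addr_absorb => i _; apply: add_lub_neq => aiM.
    by move: (noM i); rewrite aiM eqxx.
  by case: sfree; rewrite /in_nuX [X in _ + X]sM sMM.
exists i; split=> // j ajM; apply/eqP; apply/negPn/negP => ij; case: sfree.
have : M + s = s.
  rewrite /s (bigD1 i) //= (bigD1 j) 1?eq_sym //= aiM ajM !addrA.
  by rewrite -[M + M + M]addrA -/(nu M) addr_nu.
by move=> Ms; rewrite /in_nuX -{1}Ms sM.
Qed.

End FiniteSum.
End Supertropical.

Theorem lemma5p6 (X : comPzSemiRingType) (HX : supertropical X) :
  (* (1) bounded join-semilattice, with the explicit suprema *)
  (ile_partial_order X /\
   (forall F : seq X, exists m : X, is_lub (fun z => z \in F) m) /\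
   is_lub (fun _ : X => False) 0 /\
   (forall x y : X, x <> y -> is_lub (fun z => z = x \/ z = y) (x + y)) /\
   (forall x : X, is_lub (fun z => z = x \/ z = x) x)) /\
  (* (2) *)
  (forall (n : nat) (a : 'I_n -> X) (M : X),
      is_lub (fun z => exists i : 'I_n, z = a i) M ->
      let s := \sum_(i < n) a i in
      (~ in_nuX s <-> (~ in_nuX M /\ exists! i : 'I_n, a i = M)) /\
      ((~ in_nuX M /\ exists! i : 'I_n, a i = M) <->
       (~ in_nuX M /\ exists! i : 'I_n, a i = M /\ M = s))).
Proof.
split.
  split; first exact: ile_partial_orderP.
  split; first exact: exists_is_lub_seq.
  split; first exact: is_lub_empty.
  by split; [apply: is_lub_pair | apply: is_lub_dup].
move=> n a M lubM s; split.
  split=> [sfree|[Mfree uniqM]]; last by rewrite /s (sum_unique_lub HX lubM uniqM).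
  split; last by apply: (sum_ghost_free_unique HX lubM).
  by rewrite -(sum_ghost_free_lub HX lubM sfree).
split=> [[Mfree uniqM]|[Mfree [i [[aiM Ms] iuniq]]]]; split=> //.
  have sM := sum_unique_lub HX lubM uniqM.
  case: uniqM => i [aiM iuniq]; exists i; split=> // j [ajM _]; exact: iuniq.
by exists i; split=> // j ajM; apply: iuniq.
Qed.
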